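(* Let $(\mathfrak J,B)$ be a $B$-irreducible pseudo-euclidean Jordan algebra. Then its operator of Casimir type $R_c$ is either nilpotent or invertible.
   Context: All algebras are finite-dimensional over a field of characteristic zero. A Jordan algebra is a commutative algebra with $x(yx^2)=(xy)x^2$; $(\mathfrak J,B)$ is pseudo-euclidean if $B$ is nondegenerate symmetric with $B(xy,z)=B(x,yz)$. $(\mathfrak J,B)$ is $B$-irreducible if it has no nontrivial ideal $\mathcal I$ with $B|_{\mathcal I\times\mathcal I}$ nondegenerate. With bases $\{e_i\},\{e'_i\}$ of $\mathfrak J$ satisfying $B(e_i,e'_j)=\delta_{ij}$ and $c=\sum_ie_ie'_i$, the operator of Casimir type is $R_c(x)=xc$ (independent of the choice of such bases). *)

From HB Require Import structures.
From mathcomp Require Import all_boot all_order all_algebra.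
Set Implicit Arguments. Unset Strict Implicit. Unset Printing Implicit Defensive.
Import GRing.Theory.
Local Open Scope ring_scope.

Section Defs.
Variables (F : fieldType) (V : vectType F).

Definition bilinear_mul (mul : V -> V -> V) : Prop :=
  (forall x a y z, mul x (a *: y + z) = a *: mul x y + mul x z) /\
  (forall x a y z, mul (a *: y + z) x = a *: mul y x + mul z x).

Definition jordan_mul (mul : V -> V -> V) : Prop :=
  bilinear_mul mul /\
  (forall x y, mul x y = mul y x) /\
  (forall x y, mul x (mul y (mul x x)) = mul (mul x y) (mul x x)).

Definition pseudo_euclidean (mul : V -> V -> V) (B : V -> V -> F) : Prop :=
  (forall x a y z, B x (a *: y + z) = a * B x y + B x z) /\
  (forall x y, B x y = B y x) /\
  (forall x, (forall y, B x y = 0) -> x = 0) /\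
  (forall x y z, B (mul x y) z = B x (mul y z)).

Definition is_ideal (mul : V -> V -> V) (I : {vspace V}) : Prop :=
  forall x y, y \in I -> (mul x y \in I) && (mul y x \in I).

Definition B_nondeg_on (B : V -> V -> F) (I : {vspace V}) : Prop :=
  forall x, x \in I -> (forall y, y \in I -> B x y = 0) -> x = 0.

Definition B_irreducible (mul : V -> V -> V) (B : V -> V -> F) : Prop :=
  forall I : {vspace V}, is_ideal mul I -> B_nondeg_on B I ->
    I = 0%VS \/ I = fullv.

Definition dual_bases (B : V -> V -> F) (e e' : (\dim {:V}).-tuple V) : Prop :=
  basis_of fullv e /\ basis_of fullv e' /\
  (forall i j : 'I_(\dim {:V}), B (tnth e i) (tnth e' j) = (i == j)%:R).

Definition casimir_elt (mul : V -> V -> V) (e e' : (\dim {:V}).-tuple V) : V :=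
  \sum_(i < \dim {:V}) mul (tnth e i) (tnth e' i).

Definition R_casimir (mul : V -> V -> V) (e e' : (\dim {:V}).-tuple V) : V -> V :=
  fun x => mul x (casimir_elt mul e e').

Definition nilpotent_op (f : V -> V) : Prop :=
  exists k : nat, forall x, iter k f x = 0.

End Defs.

(* Linearizing the Jordan identity (this is where characteristic 0 is used)
   gives an identity between products of left multiplications L_x; taking
   traces of two instances of it shows tr L_(x(zq)) = tr L_(z(xq)).  Since
   B(c, w) = tr L_w, this makes R_c commute with every L_x, and R_c is
   B-self-adjoint by associativity of B.  So the Fitting null component
   ker R_c^m is an ideal, and self-adjointness makes it B-orthogonal to the
   Fitting one component im R_c^m, hence B is nondegenerate on it.
   B-irreducibility leaves ker R_c^m = 0 (R_c invertible) or ker R_c^m = J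
   (R_c nilpotent). *)

From HB Require Import structures.
From mathcomp Require Import all_boot all_order all_algebra.
Set Implicit Arguments.
Unset Strict Implicit.
Unset Printing Implicit Defensive.
Import GRing.Theory.
Local Open Scope ring_scope.

Section Polarization.
Variables (F : fieldType) (U : lmodType F) (W : zmodType).
Hypothesis charF0 : [pchar F] =i pred0.

Lemma pchar0_mulrSn_eq0 n (u : U) : u *+ n.+1 = 0 -> u = 0.
Proof.
rewrite -scaler_nat => /eqP; rewrite scaler_eq0 => /orP [|/eqP //].
by move: charF0 => /pcharf0P ->.
Qed.

Variable T : W -> W -> W -> U.
Hypothesis TDr : forall a b c c', T a b (c + c') = T a b c + T a b c'.
Hypothesis T12 : forall a b c, T a b c = T b a c.
Hypothesis T23 : forall a b c, T a b c = T a c b.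

Let TDm a b b' c : T a (b + b') c = T a b c + T a b' c.
Proof. by rewrite T23 TDr (T23 a c b) (T23 a c b'). Qed.
Let TDl a a' b c : T (a + a') b c = T a b c + T a' b c.
Proof. by rewrite T12 TDm (T12 b a c) (T12 b a' c). Qed.
Let T0r a b : T a b 0 = 0.
Proof. by apply: (@addrI _ (T a b 0)); rewrite -TDr !addr0. Qed.
Let TNr a b c : T a b (- c) = - T a b c.
Proof. by apply: (@addrI _ (T a b c)); rewrite -TDr !subrr T0r. Qed.

Hypothesis Tdiag : forall x, T x x x = 0.

Let T_cube_add x b : T (x + b) (x + b) (x + b) = (T x x b + T x b b) *+ 3.
Proof.
rewrite !TDl !TDm !TDr (T12 b x x) (T23 x b x) (T23 b b x) (T12 b x b) !Tdiag.
rewrite add0r addr0 !mulrS mulr0n addr0.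
move: (T x x b) (T x b b) => u v.
by rewrite [u + (u + v)]addrC (addrACA (u + v) u) addrC.
Qed.

Let Txxb x b : T x x b = 0.
Proof.
have := T_cube_add x b; rewrite Tdiag => /esym/pchar0_mulrSn_eq0/eqP.
rewrite addr_eq0 => /eqP hxb.
have := T_cube_add x (- b).
rewrite Tdiag !TNr (T23 x (- b)) TNr opprK hxb opprK -mulr2n -mulrnA.
by move=> /esym/pchar0_mulrSn_eq0 ->; rewrite oppr0.
Qed.

Lemma symmetric_triadditive_eq0 a b c : T a b c = 0.
Proof.
apply: (@pchar0_mulrSn_eq0 1); have := Txxb (a + b) c.
by rewrite !TDl !TDm !Txxb (T12 b a) add0r addr0.
Qed.

End Polarization.

Section Fitting.
Variables (F : fieldType) (V : vectType F) (g : 'End(V)).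

Definition lfun_iter k : 'End(V) := iter k (comp_lfun g) \1%VF.

Lemma lfun_iterE k v : lfun_iter k v = iter k g v.
Proof. by elim: k => [|k IHk]; rewrite ?id_lfunE //= comp_lfunE IHk. Qed.

Local Notation K k := (lker (lfun_iter k)).

Lemma mem_lker_iter k v : (v \in K k) = (iter k g v == 0).
Proof. by rewrite memv_ker lfun_iterE. Qed.

Lemma lker_iterS k : (K k <= K k.+1)%VS.
Proof.
by apply/subvP => v; rewrite !mem_lker_iter iterS => /eqP ->; rewrite linear0.
Qed.

Lemma lker_iter_stable : exists m, K m = K m.+1.
Proof.
have grow k : (exists m, K m = K m.+1) \/ (k <= \dim (K k))%N.
  elim: k => [|k [|IHk]]; [by right | by left |].
  have [|neqK] := eqVneq (K k) (K k.+1); first by left; exists k.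
  right; apply: leq_ltn_trans IHk _; rewrite ltnNge.
  by apply: contra neqK => leK; rewrite eqEdim lker_iterS.
have [//|] := grow (\dim {:V}).+1.
by move=> /leq_trans/(_ (dimvS (subvf _))); rewrite ltnn.
Qed.

Variable m : nat.
Hypothesis Kstable : K m = K m.+1.

Lemma iter_stable_eq0 j v : iter (m + j) g v = 0 -> iter m g v = 0.
Proof.
elim: j v => [|j IHj] v; first by rewrite addn0.
rewrite addnS -addSn iterD => /eqP; rewrite -mem_lker_iter -Kstable.
by rewrite mem_lker_iter -iterD => /eqP /IHj.
Qed.

Lemma fitting_decomposition :
  (K m :&: limg (lfun_iter m) = 0)%VS /\ (K m + limg (lfun_iter m) = fullv)%VS.
Proof.
have capK0 : (K m :&: limg (lfun_iter m) = 0)%VS.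
  apply/vspaceP => v; rewrite memv0; apply/memv_capP/eqP => [[]|->]; last first.
    by rewrite !mem0v.
  rewrite mem_lker_iter => /eqP gv0 /memv_imgP [w _ vE].
  by rewrite vE lfun_iterE in gv0 *; apply: (@iter_stable_eq0 m); rewrite iterD.
split=> //; apply/eqP; rewrite eqEdim subvf /= dimv_disjoint_sum //.
by rewrite -(limg_ker_dim (lfun_iter m) fullv) capfv.
Qed.

Lemma lker_iter_full_nilpotent k : K k = fullv -> nilpotent_op g.
Proof.
by move=> Kfull; exists k => v; apply/eqP; rewrite -mem_lker_iter Kfull memvf.
Qed.

Lemma lker_iter0_bijective : K m = 0%VS -> bijective g.
Proof.
move=> K0; have /eqP lker0 : lker g = 0%VS.
  apply/vspaceP => v; rewrite memv0 memv_ker; apply/eqP/eqP => [gv0|->]; last first.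
    exact: linear0.
  have : v \in K m.+1.
    rewrite mem_lker_iter iterSr gv0; apply/eqP.
    by elim: (m) => //= k ->; rewrite linear0.
  by rewrite -Kstable K0 memv0 => /eqP.
by exists (g^-1)%VF; [apply: lker0_lfunK | apply: lker0_lfunVK].
Qed.

End Fitting.

Section DualBasisTrace.
Variables (F : fieldType) (V : vectType F) (B : V -> V -> F).
Hypothesis BlinDr : forall x a y z, B x (a *: y + z) = a * B x y + B x z.
Hypothesis Bsym : forall x y, B x y = B y x.
Hypothesis Bnondeg : forall x, (forall y, B x y = 0) -> x = 0.

Lemma BDr x y z : B x (y + z) = B x y + B x z.
Proof. by have := BlinDr x 1 y z; rewrite scale1r mul1r. Qed.
Lemma B0r x : B x 0 = 0.
Proof. by apply: (@addrI _ (B x 0)); rewrite -BDr !addr0. Qed.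
Lemma BZr x a y : B x (a *: y) = a * B x y.
Proof. by rewrite -[a *: y]addr0 BlinDr B0r addr0. Qed.
Lemma BNr x y : B x (- y) = - B x y.
Proof. by rewrite -scaleN1r BZr mulN1r. Qed.
Lemma BDl x y z : B (y + z) x = B y x + B z x.
Proof. by rewrite !(Bsym _ x) BDr. Qed.
Lemma BNl x y : B (- y) x = - B y x.
Proof. by rewrite !(Bsym _ x) BNr. Qed.
Lemma B_sumr x I r (P : pred I) (v : I -> V) :
  B x (\sum_(i <- r | P i) v i) = \sum_(i <- r | P i) B x (v i).
Proof. exact: (big_morph (B x) (BDr x) (B0r x)). Qed.
Lemma B_suml x I r (P : pred I) (v : I -> V) :
  B (\sum_(i <- r | P i) v i) x = \sum_(i <- r | P i) B (v i) x.
Proof. by rewrite Bsym B_sumr; apply: eq_bigr => i _; rewrite Bsym. Qed.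

Lemma nondeg_form_inj u v : (forall w, B u w = B v w) -> u = v.
Proof.
move=> eqB; apply/eqP; rewrite -subr_eq0; apply/eqP; apply: Bnondeg => w.
by rewrite BDl BNl eqB subrr.
Qed.

Lemma selfadjoint_fitting_ker_nondeg (g : 'End(V)) m :
  (forall u v, B (g u) v = B u (g v)) ->
  lker (lfun_iter g m) = lker (lfun_iter g m.+1) ->
  B_nondeg_on B (lker (lfun_iter g m)).
Proof.
move=> g_sym Kstable k; rewrite mem_lker_iter => /eqP gk0 orthK.
apply: Bnondeg => w.
have [_ KIm] := fitting_decomposition Kstable.
have : w \in (lker (lfun_iter g m) + limg (lfun_iter g m))%VS by rewrite KIm memvf.
case/memv_addP => u Ku [_ /memv_imgP [v _ ->] ->].
have gm_sym u' v' : B (iter m g u') v' = B u' (iter m g v').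
  by elim: (m) u' v' => //= j IHj u' v'; rewrite g_sym IHj -iterSr.
by rewrite BDr orthK // lfun_iterE -gm_sym gk0 Bsym B0r add0r.
Qed.

Variables e e' : (\dim {:V}).-tuple V.
Hypothesis Hdual : dual_bases B e e'.

Local Notation n := (\dim {:V}).

Lemma dual_basis_expansion v : v = \sum_(j < n) B (tnth e j) v *: tnth e' j.
Proof.
apply/eqP; rewrite -subr_eq0; apply/eqP; apply: Bnondeg => w.
have coord0 k : B (tnth e k) (v - \sum_(j < n) B (tnth e j) v *: tnth e' j) = 0.
  rewrite BDr BNr B_sumr (bigD1 k) //= big1 ?addr0.
    by rewrite BZr Hdual.2.2 eqxx mulr1 subrr.
  by move=> j /negbTE neq_jk; rewrite BZr Hdual.2.2 eq_sym neq_jk mulr0.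
rewrite Bsym (coord_basis Hdual.1 (memvf w)) B_suml big1 // => i _.
by rewrite Bsym BZr -tnth_nth Bsym coord0 mulr0.
Qed.

Definition dual_trace (f : 'End(V)) : F :=
  \sum_(i < n) B (tnth e i) (f (tnth e' i)).

Lemma dual_traceD f g : dual_trace (f + g) = dual_trace f + dual_trace g.
Proof. by rewrite -big_split; apply: eq_bigr => i _; rewrite add_lfunE BDr. Qed.
Lemma dual_traceN f : dual_trace (- f) = - dual_trace f.
Proof. by rewrite -sumrN; apply: eq_bigr => i _; rewrite opp_lfunE BNr. Qed.

Lemma dual_trace0 : dual_trace 0 = 0.
Proof. by apply: (@addrI _ (dual_trace 0)); rewrite -dual_traceD !addr0. Qed.

Lemma dual_trace_comp_comm f g : dual_trace (f \o g)%VF = dual_trace (g \o f)%VF.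
Proof.
have expand f1 f2 : dual_trace (f1 \o f2)%VF =
    \sum_(i < n) \sum_(j < n)
      B (tnth e j) (f2 (tnth e' i)) * B (tnth e i) (f1 (tnth e' j)).
  apply: eq_bigr => i _; rewrite comp_lfunE {1}[f2 _]dual_basis_expansion.
  by rewrite linear_sum B_sumr; apply: eq_bigr => j _; rewrite linearZ BZr.
rewrite !expand exchange_big /=.
by apply: eq_bigr => i _; apply: eq_bigr => j _; rewrite mulrC.
Qed.

End DualBasisTrace.

Section JordanAlgebra.
Variables (F : fieldType) (V : vectType F) (mul : V -> V -> V).
Hypothesis HJ : jordan_mul mul.

Let mulC : forall x y, mul x y = mul y x := HJ.2.1.

Lemma jordan_mul_linear x : linear (mul x).
Proof. exact: HJ.1.1 x. Qed.

Definition lmul x : 'End(V) :=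
  linfun (HB.pack (mul x)
            (GRing.isLinear.Build F V V *:%R (mul x) (jordan_mul_linear x))
          : {linear V -> V}).

Lemma lmulE x y : lmul x y = mul x y.
Proof. exact: lfunE. Qed.

(* The polarization in x of x(yx^2) - (xy)x^2. *)
Definition jordan_polar y a b c :=
  mul a (mul y (mul b c)) + mul b (mul y (mul c a)) + mul c (mul y (mul a b)) -
  (mul (mul a y) (mul b c) + mul (mul b y) (mul c a) + mul (mul c y) (mul a b)).

Definition jordan_op y a b : 'End(V) :=
  ((lmul a \o lmul y \o lmul b) + (lmul b \o lmul y \o lmul a)
     + lmul (mul y (mul a b))
   - ((lmul (mul a y) \o lmul b) + (lmul (mul b y) \o lmul a)
     + (lmul (mul a b) \o lmul y)))%VF.

Lemma jordan_polarE y a b c : jordan_polar y a b c = jordan_op y a b c.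
Proof.
rewrite /jordan_op !(add_lfunE, opp_lfunE, comp_lfunE, lmulE) /jordan_polar.
by rewrite [mul c a]mulC [mul c (mul y _)]mulC [mul (mul c y) _]mulC [mul c y]mulC.
Qed.

Hypothesis charF0 : [pchar F] =i pred0.

Lemma jordan_polar_eq0 y a b c : jordan_polar y a b c = 0.
Proof.
apply: (@symmetric_triadditive_eq0 F) => // {a b c} [a b c c'|a b c|a b c|x].
- by rewrite !jordan_polarE linearD.
- rewrite /jordan_polar [mul a c]mulC [mul c b]mulC [mul b a]mulC.
  by congr (_ + _ - (_ + _)); rewrite addrC.
- rewrite /jordan_polar [mul a c]mulC [mul c b]mulC [mul b a]mulC.
  by congr (_ - _); rewrite addrAC addrC.
- by rewrite /jordan_polar !HJ.2.2 subrr.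
Qed.

Lemma jordan_op_eq0 y a b : jordan_op y a b = 0.
Proof. by apply/lfunP => c; rewrite -jordan_polarE jordan_polar_eq0 zero_lfunE. Qed.

Lemma lker_iter_ideal (g : 'End(V)) k :
  (forall x q, g (mul x q) = mul x (g q)) -> is_ideal mul (lker (lfun_iter g k)).
Proof.
move=> g_mul x y; rewrite !mem_lker_iter (mulC y x) andbb => /eqP gy0.
have -> : iter k g (mul x y) = mul x (iter k g y).
  by elim: (k) => //= j ->; rewrite g_mul.
by rewrite gy0 -lmulE linear0.
Qed.

Variable B : V -> V -> F.
Hypothesis HB : pseudo_euclidean mul B.
Variables e e' : (\dim {:V}).-tuple V.
Hypothesis Hdual : dual_bases B e e'.

Let BlinDr := HB.1.
Let Bsym := HB.2.1.
Let Bnondeg := HB.2.2.1.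
Let Bmul := HB.2.2.2.
Local Notation tr := (dual_trace B e e').
Let trD := dual_traceD BlinDr e e'.
Let trN := dual_traceN BlinDr e e'.
Let tr_comm := dual_trace_comp_comm BlinDr Bsym Bnondeg Hdual.

Lemma dual_trace_lmul_exchange x z q :
  tr (lmul (mul x (mul z q))) = tr (lmul (mul z (mul x q))).
Proof.
(* The instances at (x, z, q) and (z, x, q) have the same right-hand side
   and, up to cyclic rotation, the same triple-product traces. *)
have trJ y a b : tr (jordan_op y a b) = 0 by rewrite jordan_op_eq0 dual_trace0.
move: (trJ x z q) (trJ z x q); rewrite /jordan_op !(trD, trN).
rewrite (mulC z x) (mulC q x) (mulC q z) (tr_comm (lmul z \o lmul x)).
rewrite (tr_comm (lmul x \o lmul z)) !comp_lfunA => /eqP + /eqP.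
rewrite !subr_eq0 => /eqP trJxzq /eqP trJzxq.
apply: (@addrI _ (tr (lmul q \o lmul z \o lmul x)
                  + tr (lmul q \o lmul x \o lmul z))).
by rewrite trJxzq [_ + tr (lmul q \o lmul x \o _)]addrC trJzxq [RHS]addrAC.
Qed.

Local Notation c := (casimir_elt mul e e').
Local Notation Rc := (R_casimir mul e e').

Lemma B_casimir w : B c w = tr (lmul w).
Proof.
rewrite (B_suml BlinDr Bsym); apply: eq_bigr => i _.
by rewrite Bmul lmulE mulC.
Qed.

Lemma R_casimir_mul x q : Rc (mul x q) = mul x (Rc q).
Proof.
apply: (nondeg_form_inj BlinDr Bsym Bnondeg) => w; rewrite /R_casimir.
rewrite mulC Bmul B_casimir (mulC x (mul q c)) Bmul (mulC q) Bmul B_casimir.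
rewrite (mulC (mul x q) w) dual_trace_lmul_exchange (mulC w q).
exact: dual_trace_lmul_exchange.
Qed.

Lemma R_casimir_selfadjoint u v : B (Rc u) v = B u (Rc v).
Proof. by rewrite /R_casimir Bmul mulC. Qed.

End JordanAlgebra.

Theorem mainTheorem15 (F : fieldType) (V : vectType F)
  (mul : V -> V -> V) (B : V -> V -> F)
  (charF0 : [pchar F] =i pred0)
  (HJ : jordan_mul mul) (HB : pseudo_euclidean mul B)
  (Hirr : B_irreducible mul B)
  (e e' : (\dim {:V}).-tuple V) (Hdual : dual_bases B e e') :
  nilpotent_op (R_casimir mul e e') \/ bijective (R_casimir mul e e').
Proof.
pose Rc := lmul HJ (casimir_elt mul e e').
have RcE : Rc =1 R_casimir mul e e' by move=> x; rewrite lmulE HJ.2.1.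
have Rc_mul x q : Rc (mul x q) = mul x (Rc q).
  by rewrite !RcE (R_casimir_mul HJ charF0 HB Hdual).
have Rc_sym u v : B (Rc u) v = B u (Rc v).
  by rewrite !RcE (R_casimir_selfadjoint HJ HB).
have [m Kstable] := lker_iter_stable Rc.
have Knondeg := selfadjoint_fitting_ker_nondeg HB.1 HB.2.1 HB.2.2.1 Rc_sym Kstable.
case: (Hirr _ (lker_iter_ideal HJ Rc_mul) Knondeg) => [K0 | Kfull].
  by right; apply: eq_bij RcE; apply: lker_iter0_bijective Kstable K0.
have [k Rc_nil] := lker_iter_full_nilpotent Kfull.
by left; exists k => x; rewrite -(eq_iter RcE) Rc_nil.
Qed.
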